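(* Let $G_1$ be a restricted frame graph, let $G_2$ be a chandelier with pivot $p$, and let $v\in V(G_1)$. Then the graph obtained from the disjoint union of $G_1$ and $G_2$ by identifying $v$ with $p$ is a restricted frame graph.
   Context: A chandelier is a graph obtained from a tree $T$ by adding a new vertex, the pivot, adjacent to every leaf of $T$. A frame is the boundary of an axis-parallel box $I\times J\subset\mathbb R^2$. A graph $G$ is a restricted frame graph if there is a family of frames $\{F_u : u\in V(G)\}$ with $uw\in E(G)$ iff $F_u\cap F_w\neq\emptyset$, satisfying: (1) corners of a frame do not coincide with any point of another frame; (2) the left side of any frame does not intersect any other frame; (3) if the right side of a frame intersects a second frame, this right side intersects both the top and the bottom side of the second frame; (4) if two frames have non-empty intersection, then no frame is entirely contained in the intersection of the two regions bounded by these two frames. *)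

From Stdlib Require Import Reals.
From mathcomp Require Import all_boot.

Set Implicit Arguments.
Unset Strict Implicit.
Unset Printing Implicit Defensive.

(* A frame is the boundary of the axis-parallel box [fl, fr] x [fb, ft];
   non-degeneracy (fl < fr, fb < ft) is required in [restricted_frame_graph]. *)
Record frame := Frame { fl : R; fr : R; fb : R; ft : R }.

Section FrameGeom.
Local Open Scope R_scope.

Definition frame_ok (F : frame) : Prop := fl F < fr F /\ fb F < ft F.

Definition in_region (F : frame) (x y : R) : Prop :=
  fl F <= x <= fr F /\ fb F <= y <= ft F.

Definition left_side (F : frame) (x y : R) : Prop :=
  x = fl F /\ fb F <= y <= ft F.
Definition right_side (F : frame) (x y : R) : Prop :=
  x = fr F /\ fb F <= y <= ft F.
Definition bottom_side (F : frame) (x y : R) : Prop :=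
  y = fb F /\ fl F <= x <= fr F.
Definition top_side (F : frame) (x y : R) : Prop :=
  y = ft F /\ fl F <= x <= fr F.

Definition on_frame (F : frame) (x y : R) : Prop :=
  left_side F x y \/ right_side F x y \/ bottom_side F x y \/ top_side F x y.

Definition corner (F : frame) (x y : R) : Prop :=
  (x = fl F \/ x = fr F) /\ (y = fb F \/ y = ft F).

Definition frames_meet (F G : frame) : Prop :=
  exists x y, on_frame F x y /\ on_frame G x y.

End FrameGeom.

(* A (finite simple) graph is an irreflexive relation [e] on a finType.
   [e] is a restricted frame graph if it is the intersection graph of a
   family of frames satisfying conditions (1)-(4). *)
Definition restricted_frame_graph (T : finType) (e : rel T) : Prop :=
  irreflexive e /\
  exists F : T -> frame,
    (forall u, frame_ok (F u)) /\
    (forall u w, u != w -> (e u w <-> frames_meet (F u) (F w))) /\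
    (forall u w, u != w -> forall x y, corner (F u) x y -> ~ on_frame (F w) x y) /\
    (forall u w, u != w -> forall x y, left_side (F u) x y -> ~ on_frame (F w) x y) /\
    (forall u w, u != w ->
       (exists x y, right_side (F u) x y /\ on_frame (F w) x y) ->
       (exists x y, right_side (F u) x y /\ top_side (F w) x y) /\
       (exists x y, right_side (F u) x y /\ bottom_side (F w) x y)) /\
    (forall u w, u != w -> frames_meet (F u) (F w) ->
       forall z, ~ (forall x y, on_frame (F z) x y ->
                      in_region (F u) x y /\ in_region (F w) x y)).

Definition del_rel (T : finType) (e : rel T) (p : T) : rel T :=
  [rel x y | [&& e x y, x != p & y != p]].

Definition is_tree_minus (T : finType) (e : rel T) (p : T) : Prop :=
  (exists x : T, x != p) /\
  (forall x y, x != p -> y != p -> connect (del_rel e p) x y) /\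
  (forall s : seq T, uniq s -> 2 < size s -> ~~ cycle (del_rel e p) s).

Definition leaf_minus (T : finType) (e : rel T) (p : T) (x : T) : bool :=
  (x != p) && (#|[set y | del_rel e p x y]| == 1).

Definition chandelier (T : finType) (e : rel T) (p : T) : Prop :=
  irreflexive e /\ symmetric e /\ is_tree_minus e p /\
  (forall x, x != p -> (e p x = leaf_minus e p x)).

(* vertex set: V1 + (V2 \ {p}); the identified vertex is [inl v]. *)
Definition glue (V1 V2 : finType) (p : V2) (e1 : rel V1) (e2 : rel V2) (v : V1)
  : rel (V1 + {x : V2 | x != p}) :=
  fun a b =>
    match a, b with
    | inl x, inl y => e1 x y
    | inr x, inr y => e2 (val x) (val y)
    | inl x, inr y => (x == v) && e2 p (val y)
    | inr x, inl y => (y == v) && e2 (val x) p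
    end.

Arguments glue {V1 V2} p e1 e2 v.

(** Root the tree G2 - p at a vertex that is not a leaf (if there is one) and draw
    each vertex x as a frame with horizontal span [depth x, depth x + 3/2] and a
    vertical band nested in the band of its parent, siblings occupying disjoint
    slots.  The right side of a parent then crosses exactly the frames of its
    children, any other two frames are disjoint or nested, and the leaf frames are
    stretched to the right across a common vertical line.  Shrinking this picture
    into a small square around the top-right corner of the frame of v, with that
    line sent to the right side of v, makes the frame of v cross exactly the leaf
    frames, so it plays the role of the pivot; as no other frame of G1 comes near
    that corner, conditions (1)-(4) follow from those of G1 and of the tree picture. *)

From Stdlib Require Import Reals Lra.
From mathcomp Require Import all_boot zify.

Set Implicit Arguments.
Unset Strict Implicit.
Unset Printing Implicit Defensive.

Section FrameRelations.
Local Open Scope R_scope.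

(* The right side of F crosses G through its top and bottom sides; the two regions
   then intersect in [poke_overlap F G]. *)
Definition pokes (F G : frame) : Prop :=
  fl F < fl G < fr F /\ fr F < fr G /\ fb F < fb G /\ ft G < ft F.

Definition strictly_inside (F G : frame) : Prop :=
  fl G < fl F /\ fr F < fr G /\ fb G < fb F /\ ft F < ft G.

Definition frames_apart (F G : frame) : Prop :=
  fr F < fl G \/ fr G < fl F \/ ft F < fb G \/ ft G < fb F \/
  strictly_inside F G \/ strictly_inside G F.

Definition well_placed (F G : frame) : Prop :=
  pokes F G \/ pokes G F \/ frames_apart F G.

Definition subbox (Z B : frame) : Prop :=
  fl B <= fl Z /\ fr Z <= fr B /\ fb B <= fb Z /\ ft Z <= ft B.

Definition poke_overlap (F G : frame) : frame := Frame (fl G) (fr F) (fb G) (ft G).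

Definition square_clear (F : frame) (x y d : R) : Prop :=
  (fl F < x - d /\ x + d < fr F /\ fb F < y - d /\ y + d < ft F) \/
  (fr F < x - d \/ x + d < fl F \/ ft F < y - d \/ y + d < fb F).

End FrameRelations.

Ltac frame_lra :=
  repeat match goal with |- forall _, _ => intro end;
  unfold well_placed, frames_apart, square_clear, pokes, strictly_inside, subbox, poke_overlap,
    frame_ok, frames_meet, on_frame, left_side, right_side, bottom_side, top_side,
    corner, in_region in *;
  repeat match goal with
  | |- forall _, _ => intro
  | |- ~ _ => intro
  | H : _ /\ _ |- _ => destruct H
  | H : _ \/ _ |- _ => destruct H
  | H : exists _, _ |- _ => destruct H
  end;
  simpl in *; intuition lra.

Section FramePlacement.
Local Open Scope R_scope.

Lemma frames_apart_sym F G : frames_apart F G -> frames_apart G F.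
Proof. frame_lra. Qed.

Lemma on_frame_in_region F x y : frame_ok F -> on_frame F x y -> in_region F x y.
Proof. frame_lra. Qed.

Lemma frames_apart_not_meet F G :
  frame_ok F -> frame_ok G -> frames_apart F G -> ~ frames_meet F G.
Proof. frame_lra. Qed.

Lemma pokes_meet F G : frame_ok G -> pokes F G -> frames_meet F G.
Proof.
move=> HG HFG; exists (fr F), (ft G); split; [right; left | right; right; right];
  frame_lra.
Qed.

Lemma pokes_not_apart F G : frame_ok F -> frame_ok G -> pokes F G -> ~ frames_apart F G.
Proof. frame_lra. Qed.

Lemma pokes_asym F G : pokes F G -> ~ pokes G F.
Proof. frame_lra. Qed.

Lemma well_placed_corner F G x y :
  frame_ok F -> frame_ok G -> well_placed F G -> corner F x y -> ~ on_frame G x y.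
Proof. frame_lra. Qed.

Lemma well_placed_left_side F G x y :
  frame_ok F -> frame_ok G -> well_placed F G -> left_side F x y -> ~ on_frame G x y.
Proof. frame_lra. Qed.

Lemma well_placed_right_side F G :
  frame_ok F -> frame_ok G -> well_placed F G ->
  (exists x y, right_side F x y /\ on_frame G x y) ->
  (exists x y, right_side F x y /\ top_side G x y) /\
  (exists x y, right_side F x y /\ bottom_side G x y).
Proof.
move=> HF HG [HFG|[HGF|Hap]] [x [y [Hr Ho]]].
- by split; [exists (fr F), (ft G) | exists (fr F), (fb G)]; frame_lra.
- by exfalso; frame_lra.
- by exfalso; apply: (frames_apart_not_meet HF HG Hap); exists x, y; split => //; right; left.
Qed.

Lemma on_frame_subbox F Z : frame_ok Z ->
  (forall x y, on_frame Z x y -> in_region F x y) -> subbox Z F.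
Proof.
move=> HZ HF.
have := HF (fl Z) (fb Z); have := HF (fr Z) (ft Z).
by frame_lra.
Qed.

Lemma subbox_poke_overlap Z F G :
  subbox Z F -> subbox Z G -> subbox Z (poke_overlap F G).
Proof. frame_lra. Qed.

Lemma affine_lt s o a b : 0 < s -> (s * a + o < s * b + o <-> a < b).
Proof. by move=> Hs; split=> H; nra. Qed.

Lemma affine_le s o a b : 0 < s -> (s * a + o <= s * b + o <-> a <= b).
Proof. by move=> Hs; split=> H; nra. Qed.

Section AffineImage.
Variables (sx ox sy oy : R).
Hypotheses (sx_gt0 : 0 < sx) (sy_gt0 : 0 < sy).

Definition affine_frame (F : frame) : frame :=
  Frame (sx * fl F + ox) (sx * fr F + ox) (sy * fb F + oy) (sy * ft F + oy).

Lemma affine_frame_ok F : frame_ok F -> frame_ok (affine_frame F).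
Proof. by rewrite /frame_ok /= !affine_lt. Qed.

Lemma affine_pokes F G : pokes (affine_frame F) (affine_frame G) <-> pokes F G.
Proof. by rewrite /pokes /= !affine_lt. Qed.

Lemma affine_frames_apart F G :
  frames_apart F G -> frames_apart (affine_frame F) (affine_frame G).
Proof. by rewrite /frames_apart /strictly_inside /= !affine_lt. Qed.

Lemma affine_subbox Z B : subbox (affine_frame Z) (affine_frame B) <-> subbox Z B.
Proof. by rewrite /subbox /= !affine_le. Qed.

End AffineImage.
End FramePlacement.

Section CornerClearance.
Local Open Scope R_scope.

Lemma in_region_off_frame F x y :
  in_region F x y -> ~ on_frame F x y -> fl F < x < fr F /\ fb F < y < ft F.
Proof.
move=> [[Hx1 Hx2] [Hy1 Hy2]] Hoff.
case: (Rle_lt_or_eq_dec _ _ Hx1) => [?|E]; last by case: Hoff; left.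
case: (Rle_lt_or_eq_dec _ _ Hx2) => [?|E]; last by case: Hoff; right; left.
case: (Rle_lt_or_eq_dec _ _ Hy1) => [?|E]; last by case: Hoff; right; right; left.
case: (Rle_lt_or_eq_dec _ _ Hy2) => [?|E]; last by case: Hoff; right; right; right.
by [].
Qed.

Lemma square_clear_off_frame F x y : ~ on_frame F x y ->
  exists2 d, 0 < d & forall d', 0 < d' <= d -> square_clear F x y d'.
Proof.
move=> Hoff; rewrite /square_clear.
case: (Rlt_le_dec x (fl F)) => Hx1.
  by exists ((fl F - x) / 2); [lra | move=> d' ?; right; lra].
case: (Rlt_le_dec (fr F) x) => Hx2.
  by exists ((x - fr F) / 2); [lra | move=> d' ?; right; lra].
case: (Rlt_le_dec y (fb F)) => Hy1.
  by exists ((fb F - y) / 2); [lra | move=> d' ?; right; lra].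
case: (Rlt_le_dec (ft F) y) => Hy2.
  by exists ((y - ft F) / 2); [lra | move=> d' ?; right; lra].
have [[Hx3 Hx4] [Hy3 Hy4]] := in_region_off_frame (conj (conj Hx1 Hx2) (conj Hy1 Hy2)) Hoff.
set m := Rmin (Rmin (x - fl F) (fr F - x)) (Rmin (y - fb F) (ft F - y)).
have M1 := Rmin_l (Rmin (x - fl F) (fr F - x)) (Rmin (y - fb F) (ft F - y)).
have M2 := Rmin_r (Rmin (x - fl F) (fr F - x)) (Rmin (y - fb F) (ft F - y)).
have M3 := Rmin_l (x - fl F) (fr F - x); have M4 := Rmin_r (x - fl F) (fr F - x).
have M5 := Rmin_l (y - fb F) (ft F - y); have M6 := Rmin_r (y - fb F) (ft F - y).
have Mpos : 0 < m by repeat apply: Rmin_glb_lt; lra.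
by exists (m / 2); [lra | move=> d' ?; left; rewrite -/m in M1 M2; lra].
Qed.

Lemma fin_common_radius (T : finType) (P : T -> R -> Prop) :
  (forall t, exists2 d, 0 < d & forall d', 0 < d' <= d -> P t d') ->
  exists2 d, 0 < d & forall t, P t d.
Proof.
move=> HP.
suff [d Hd Hs] : exists2 d, 0 < d & forall t, t \in enum T -> forall d', 0 < d' <= d -> P t d'.
  by exists d => // t; apply: Hs; [rewrite mem_enum | split; [lra | apply: Rle_refl]].
elim: (enum T) => [|t s [d Hd Hs]]; first by exists 1; [lra | move=> t; rewrite in_nil].
have [dt Hdt Ht] := HP t.
have M1 := Rmin_l dt d; have M2 := Rmin_r dt d.
exists (Rmin dt d); first exact: Rmin_glb_lt.
move=> t'; rewrite inE => /orP[/eqP -> | Ht'] d' Hd'; first by apply: Ht; lra.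
by apply: Hs => //; lra.
Qed.

Lemma corner_radius (V : finType) (F : V -> frame) (v : V) :
  (forall w, w != v -> ~ on_frame (F w) (fr (F v)) (ft (F v))) -> frame_ok (F v) ->
  exists2 d, 0 < d & [/\ forall w, w != v -> square_clear (F w) (fr (F v)) (ft (F v)) d,
                         d < fr (F v) - fl (F v) & d < ft (F v) - fb (F v)].
Proof.
move=> Hoff [Hv1 Hv2].
pose P w d := if w == v then d < fr (F v) - fl (F v) /\ d < ft (F v) - fb (F v)
              else square_clear (F w) (fr (F v)) (ft (F v)) d.
have [|d Hd HPd] := @fin_common_radius V P.
  move=> w; rewrite /P; case: eqP => [_ | /eqP Hw]; last exact: square_clear_off_frame (Hoff w Hw).
  have M1 := Rmin_l (fr (F v) - fl (F v)) (ft (F v) - fb (F v)).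
  have M2 := Rmin_r (fr (F v) - fl (F v)) (ft (F v) - fb (F v)).
  have Mpos : 0 < Rmin (fr (F v) - fl (F v)) (ft (F v) - fb (F v)) by apply: Rmin_glb_lt; lra.
  by exists (Rmin (fr (F v) - fl (F v)) (ft (F v) - fb (F v)) / 2) => [|d' ?]; [lra | split; lra].
exists d => //; have := HPd v; rewrite /P eqxx => -[Hw Hh]; split=> // w Hw'.
by have := HPd w; rewrite /P (negbTE Hw').
Qed.

End CornerClearance.

Section Layout.
Local Open Scope R_scope.

(* A drawing of a tree in the strip [0, lay_pivot + 2] x [0, 1/2] in which the
   frames crossing the vertical line x = lay_pivot are exactly the leaf frames;
   the last two fields are condition (4) for the poking pairs and for the pairs
   (pivot, leaf), the pivot's region being the half-plane left of that line. *)
Record pivot_layout (T : finType) (D : rel T) (leaf : pred T) := PivotLayout {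
  lay_frame : T -> frame;
  lay_pivot : R;
  lay_pivot_ge0 : 0 <= lay_pivot;
  lay_frame_ok x : frame_ok (lay_frame x);
  lay_bounds x : 0 <= fl (lay_frame x) /\ fr (lay_frame x) <= lay_pivot + 2 /\
                  0 <= fb (lay_frame x) /\ ft (lay_frame x) <= 1/2;
  lay_leaf x : leaf x -> fl (lay_frame x) < lay_pivot /\ lay_pivot + 1 <= fr (lay_frame x);
  lay_nonleaf x : ~~ leaf x -> fr (lay_frame x) < lay_pivot;
  lay_edge x y : x != y -> D x y ->
    pokes (lay_frame x) (lay_frame y) \/ pokes (lay_frame y) (lay_frame x);
  lay_nonedge x y : x != y -> ~~ D x y -> frames_apart (lay_frame x) (lay_frame y);
  lay_poke_empty a b z : pokes (lay_frame a) (lay_frame b) ->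
    ~ subbox (lay_frame z) (poke_overlap (lay_frame a) (lay_frame b));
  lay_leaf_empty l z : leaf l -> ~ subbox (lay_frame z)
    (Frame (fl (lay_frame l)) lay_pivot (fb (lay_frame l)) (ft (lay_frame l)))
}.

End Layout.

Section RootedTree.
Variables (T : finType) (D : rel T) (rt : T).
Hypothesis D_sym : symmetric D.
Hypothesis D_irr : irreflexive D.
Hypothesis rt_connect : forall x, connect D rt x.
Hypothesis D_acyclic : forall s : seq T, uniq s -> 2 < size s -> ~~ cycle D s.

Definition reachable_in (k : nat) (x : T) : bool :=
  [exists s : k.-tuple T, path D rt s && (last rt s == x)].

Lemma reachable_in_path s : path D rt s -> reachable_in (size s) (last rt s).
Proof. by move=> Hs; apply/existsP; exists (in_tuple s); rewrite Hs eqxx. Qed.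

Lemma reachable_inP k x :
  reachable_in k x -> exists s, [/\ size s = k, path D rt s & last rt s = x].
Proof. by case/existsP=> s /andP[Hs /eqP Hl]; exists s; rewrite size_tuple. Qed.

Lemma reachable_exists x : exists k, reachable_in k x.
Proof.
by have /connectP[s Hs ->] := rt_connect x; exists (size s); apply: reachable_in_path.
Qed.

Definition depth (x : T) : nat := ex_minn (reachable_exists x).

Lemma depth_reachable x : reachable_in (depth x) x.
Proof. by rewrite /depth; case: ex_minnP. Qed.

Lemma depth_min x k : reachable_in k x -> depth x <= k.
Proof. by rewrite /depth; case: ex_minnP => m _; apply. Qed.

Lemma depth_root : depth rt = 0.
Proof. by apply/eqP; rewrite -leqn0; apply: (depth_min (@reachable_in_path [::] _)). Qed.

Lemma depth_eq0 x : depth x = 0 -> x = rt.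
Proof.
move=> Hx; have [s [Hs _ <-]] := reachable_inP (depth_reachable x).
by case: s Hs => //= ? ?; rewrite Hx.
Qed.

Lemma depth_edge x y : D x y -> depth y <= (depth x).+1.
Proof.
move=> Dxy; have [s [Hs Hp Hl]] := reachable_inP (depth_reachable x).
have Hr : path D rt (rcons s y) by rewrite rcons_path Hp Hl.
by have := depth_min (reachable_in_path Hr); rewrite last_rcons size_rcons Hs.
Qed.

Definition parent (x : T) : T := odflt rt [pick y | D x y & (depth y).+1 == depth x].

Lemma parent_spec x : x != rt -> D x (parent x) /\ (depth (parent x)).+1 = depth x.
Proof.
move=> Hx; rewrite /parent; case: pickP => [y /andP[Dxy /eqP] //|Hnone]; exfalso.
have [s [Hs Hp Hl]] := reachable_inP (depth_reachable x).
case/lastP: s Hs Hp Hl => [|s y] Hs Hp; first by move=> /= Hrt; rewrite -Hrt eqxx in Hx.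
rewrite last_rcons => Eyx; subst y; rewrite size_rcons in Hs.
rewrite rcons_path in Hp; case/andP: Hp => Hp Dyx.
have Hy := depth_min (reachable_in_path Hp); have Hxy := depth_edge Dyx.
by move: (Hnone (last rt s)); rewrite D_sym Dyx /=; move/eqP; lia.
Qed.

Lemma depth_gt0_neq_root x : 0 < depth x -> x != rt.
Proof. by apply: contraTneq => ->; rewrite depth_root. Qed.

Lemma depth_iter_parent x k : k <= depth x -> depth (iter k parent x) = depth x - k.
Proof.
elim: k => [|k IH] Hk; first by rewrite subn0.
have Hd := IH (ltnW Hk).
have Hr : iter k parent x != rt by apply: depth_gt0_neq_root; rewrite Hd subn_gt0.
by have [_] := parent_spec Hr; rewrite iterS; lia.
Qed.

Lemma iter_parent_neq_root x k : k < depth x -> iter k parent x != rt.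
Proof. by move=> Hk; apply: depth_gt0_neq_root; rewrite depth_iter_parent ?subn_gt0 // ltnW. Qed.

Lemma iter_parent_depth x : iter (depth x) parent x = rt.
Proof. by apply: depth_eq0; rewrite depth_iter_parent // subnn. Qed.

Lemma path_to_ancestor x m : m <= depth x -> path D x (traject parent (parent x) m).
Proof.
elim: m x => [|m IH] x Hm //=.
have Hx : x != rt by apply: depth_gt0_neq_root; lia.
by have [Dx Hd] := parent_spec Hx; rewrite Dx IH // -ltnS Hd.
Qed.

Lemma path_from_ancestor x m :
  m <= depth x -> path D (iter m parent x) (rev (traject parent x m)).
Proof.
elim: m => [|m IH] Hm //.
rewrite trajectSr rev_rcons /= IH ?(ltnW Hm) // andbT.
by have [Dx _] := parent_spec (iter_parent_neq_root Hm); rewrite D_sym.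
Qed.

Lemma traject_parent_uniq x m : m <= (depth x).+1 -> uniq (traject parent x m).
Proof.
move=> Hm; apply/(uniqP x) => i k; rewrite !inE size_traject => Hi Hk.
rewrite !nth_traject // => /(congr1 depth); rewrite !depth_iter_parent; lia.
Qed.

Lemma lowest_common_ancestor x y : exists a b,
  [/\ a <= depth y, b <= depth x, iter a parent y = iter b parent x &
      forall i k, i <= a -> k < b -> iter i parent y != iter k parent x].
Proof.
pose common j := (j <= minn (depth x) (depth y)) &&
  (iter (depth x - j) parent x == iter (depth y - j) parent y).
have common0 : common 0 by rewrite /common leq0n !subn0 !iter_parent_depth eqxx.
have common_le j : common j -> j <= minn (depth x) (depth y) by case/andP.
case: (ex_maxnP (ex_intro _ 0 common0) common_le) => j /andP[Hj /eqP Ej] Hmax.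
rewrite leq_min in Hj; case/andP: Hj => Hjx Hjy.
exists (depth y - j), (depth x - j); split; rewrite ?leq_subr ?Ej // => i k Hi Hk.
apply/eqP => Eik; have := congr1 depth Eik.
rewrite !depth_iter_parent; [move=> Hd | lia | lia].
have : common (depth x - k).
  rewrite /common leq_min; apply/andP; split; first by apply/andP; split; lia.
  have -> : depth x - (depth x - k) = k by lia.
  have -> : depth y - (depth x - k) = i by lia.
  by rewrite Eik eqxx.
by move/Hmax; lia.
Qed.

Lemma ancestor_chains_cycle x y a b :
  D x y -> a <= depth y -> b <= depth x -> iter a parent y = iter b parent x ->
  cycle D (traject parent y a.+1 ++ rev (traject parent x b)).
Proof.
move=> Dxy Ha Hb Eab; rewrite (cycle_path x).
have -> : last x (traject parent y a.+1 ++ rev (traject parent x b)) = x.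
  rewrite last_cat; case: b Hb Eab => [|b] _ Eab.
  - by rewrite trajectSr last_rcons Eab.
  - by rewrite trajectS rev_cons last_rcons.
rewrite cat_path trajectSr last_rcons -trajectSr trajectS /= Dxy path_to_ancestor //.
by rewrite Eab path_from_ancestor.
Qed.

Lemma edge_parent x y : D x y ->
  (x != rt /\ y = parent x) \/ (y != rt /\ x = parent y).
Proof.
move=> Dxy; have [a [b [Ha Hb Eab Hdisj]]] := lowest_common_ancestor x y.
case: (leqP (a + b) 1) => Hab.
  case: a b Ha Hb Eab {Hdisj} Hab => [|[|a]] [|[|b]] //= Ha Hb Eab _.
  - by rewrite Eab D_irr in Dxy.
  - by left; split; [apply: depth_gt0_neq_root | rewrite Eab].
  - by right; split; [apply: depth_gt0_neq_root | rewrite Eab].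
(* Otherwise the edge xy closes a cycle with the chains up to the common ancestor. *)
exfalso; set s := traject parent y a.+1 ++ rev (traject parent x b).
have Hsize : 2 < size s by rewrite size_cat size_rev !size_traject; lia.
have Huniq : uniq s.
  have Uy : uniq (traject parent y a.+1) by apply: traject_parent_uniq.
  have Ux : uniq (traject parent x b) by apply: traject_parent_uniq; lia.
  rewrite cat_uniq rev_uniq Uy Ux andbT.
  apply/hasPn => z; rewrite mem_rev => /trajectP[k Hk ->].
  by apply/trajectP => -[i Hi Eki]; move/eqP: (Hdisj i k Hi Hk); rewrite Eki.
by move: (D_acyclic Huniq Hsize); rewrite ancestor_chains_cycle.
Qed.

Definition ancestor (a x : T) : Prop := exists2 k, k <= depth x & iter k parent x = a.

Lemma ancestor_refl x : ancestor x x.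
Proof. by exists 0. Qed.

Lemma ancestor_root x : ancestor rt x.
Proof. by exists (depth x); rewrite ?iter_parent_depth. Qed.

Lemma ancestor_depth a x : ancestor a x -> depth a <= depth x.
Proof. by case=> k Hk <-; rewrite depth_iter_parent // leq_subr. Qed.

Lemma ancestor_proper_neq_root a x : ancestor a x -> a != x -> x != rt.
Proof.
by case=> [[|k] Hk <-] Hax; [rewrite eqxx in Hax | apply: depth_gt0_neq_root; lia].
Qed.

Lemma ancestor_child a x : ancestor a x -> a != x ->
  exists w, [/\ w != rt, parent w = a & ancestor w x].
Proof.
case=> [[|k] Hk Ea] Hax; first by rewrite -Ea eqxx in Hax.
exists (iter k parent x); split; first exact: iter_parent_neq_root.
  by rewrite -Ea.
by exists k; rewrite // ltnW.
Qed.

Lemma nonadjacent_not_parent a x : ancestor a x -> a != x -> ~~ D a x -> a != parent x.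
Proof.
move=> Hax Hne; apply: contraNneq => ->.
by have [Dx _] := parent_spec (ancestor_proper_neq_root Hax Hne); rewrite D_sym.
Qed.

Section Bands.
Local Open Scope R_scope.

Definition band_ratio : R := / (2 * INR #|T| + 2).

Lemma band_ratio_gt0 : 0 < band_ratio.
Proof. by apply: Rinv_0_lt_compat; have := pos_INR #|T|; lra. Qed.

Lemma rank_band_ratio (x : T) : band_ratio * (INR (enum_rank x) + 3/2) < 1/2.
Proof.
have Hx : INR (enum_rank x) + 1 <= INR #|T| by rewrite -S_INR; apply/le_INR/leP/ltn_ord.
have Hinv : (2 * INR #|T| + 2) * band_ratio = 1.
  by apply: Rinv_r; have := pos_INR #|T|; lra.
have Hr := band_ratio_gt0.
have : 0 <= band_ratio * (INR #|T| - INR (enum_rank x) - 1) by apply: Rmult_le_pos; lra.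
nra.
Qed.

(* The band of a child lies inside its parent's band, at an offset given by its
   rank; band_ratio is small enough for #|T| disjoint slots to fit. *)
Fixpoint band_offset (k : nat) (x : T) : R :=
  if k is k'.+1 then band_offset k' (parent x) + (INR (enum_rank x) + 1) * band_ratio ^ k
  else 0.

Definition band_lo x := band_offset (depth x) x.
Definition band_hi x := band_lo x + band_ratio ^ depth x / 2.

Lemma band_lo_lt_hi x : band_lo x < band_hi x.
Proof. by rewrite /band_hi; have := pow_lt _ (depth x) band_ratio_gt0; lra. Qed.

Lemma band_parent x : x != rt ->
  band_lo x = band_lo (parent x) + (INR (enum_rank x) + 1) * band_ratio ^ depth x /\
  band_ratio ^ depth x = band_ratio * band_ratio ^ depth (parent x).
Proof. by move=> Hx; rewrite /band_lo; have [_ <-] := parent_spec Hx. Qed.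

Lemma child_band_sub x : x != rt ->
  band_lo (parent x) < band_lo x /\ band_hi x < band_hi (parent x).
Proof.
move=> Hx; have [Hlo HP] := band_parent Hx; rewrite /band_hi Hlo HP.
have := pow_lt _ (depth (parent x)) band_ratio_gt0.
set P := band_ratio ^ _ => HP0.
have Hk := rank_band_ratio x; have Hr := band_ratio_gt0; have Hi := pos_INR (enum_rank x).
have Hgap : 0 < P * (1/2 - band_ratio * (INR (enum_rank x) + 3/2)).
  by apply: Rmult_lt_0_compat; lra.
have Hstep : 0 < (INR (enum_rank x) + 1) * (band_ratio * P).
  by apply: Rmult_lt_0_compat; [lra | exact: Rmult_lt_0_compat].
by split; nra.
Qed.

Lemma sibling_bands_disjoint x y : x != rt -> y != rt -> parent x = parent y -> x != y ->
  band_hi x < band_lo y \/ band_hi y < band_lo x.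
Proof.
move=> Hx Hy Hxy Hne.
have [Hlx HPx] := band_parent Hx; have [Hly HPy] := band_parent Hy.
rewrite /band_hi Hlx Hly HPx HPy Hxy.
have := pow_lt _ (depth (parent y)) band_ratio_gt0.
set P := band_ratio ^ _ => HP0; have HQ := Rmult_lt_0_compat _ _ band_ratio_gt0 HP0.
set Q := band_ratio * P in HQ *.
have Hrank : enum_rank x != enum_rank y by rewrite (inj_eq enum_rank_inj).
case: (ltngtP (enum_rank x) (enum_rank y)) => [Hlt|Hlt|/val_inj Heq];
  last by rewrite Heq eqxx in Hrank.
- left; move/leP/le_INR: Hlt; rewrite S_INR => Hlt.
  have : 0 <= (INR (enum_rank y) - INR (enum_rank x) - 1) * Q.
    by apply: Rmult_le_pos; lra.
  nra.
- right; move/leP/le_INR: Hlt; rewrite S_INR => Hlt.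
  have : 0 <= (INR (enum_rank x) - INR (enum_rank y) - 1) * Q.
    by apply: Rmult_le_pos; lra.
  nra.
Qed.

Lemma ancestor_band_sub a x : ancestor a x -> band_lo a <= band_lo x /\ band_hi x <= band_hi a.
Proof.
case=> k Hk <-; elim: k Hk => [|k IH] Hk /=; first lra.
have [H1 H2] := child_band_sub (iter_parent_neq_root Hk).
by have [H3 H4] := IH (ltnW Hk); lra.
Qed.

Lemma ancestor_band_strict a x : ancestor a x -> a != x ->
  band_lo a < band_lo x /\ band_hi x < band_hi a.
Proof.
move=> Hax Hne; have [w [Hw <- Hwx]] := ancestor_child Hax Hne.
by have [H1 H2] := child_band_sub Hw; have [H3 H4] := ancestor_band_sub Hwx; lra.
Qed.

Lemma band_range x : 0 <= band_lo x /\ band_hi x <= 1/2.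
Proof.
have [H1 H2] := ancestor_band_sub (ancestor_root x).
by move: H1 H2; rewrite /band_hi /band_lo depth_root /=; lra.
Qed.

Lemma bands_laminar x y :
  band_hi x < band_lo y \/ band_hi y < band_lo x \/ ancestor x y \/ ancestor y x.
Proof.
have [[|a] [[|b] [Ha Hb Eab Hdisj]]] := lowest_common_ancestor x y.
- by right; right; left; move: Eab => /= ->; apply: ancestor_refl.
- by right; right; right; exists b.+1.
- by right; right; left; exists a.+1.
have Hy : iter a parent y != rt by apply: iter_parent_neq_root.
have Hx : iter b parent x != rt by apply: iter_parent_neq_root.
have [Ly Hy'] := ancestor_band_sub (ex_intro2 _ _ a (ltnW Ha) erefl).
have [Lx Hx'] := ancestor_band_sub (ex_intro2 _ _ b (ltnW Hb) erefl).
have := sibling_bands_disjoint Hy Hx Eab (Hdisj a b (leqnSn a) (ltnSn b)).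
by case=> H; [right; left | left]; lra.
Qed.

End Bands.

Variable leaf : pred T.
Hypothesis leaf_neighbour_unique : forall x a b, leaf x -> D x a -> D x b -> a = b.
(* The root is not a leaf, unless the tree has at most two vertices. *)
Hypothesis leaf_root : leaf rt -> forall x, leaf x.

Lemma leaf_parent_root c : c != rt -> leaf (parent c) -> parent c = rt.
Proof.
move=> Hc Hl; apply/eqP/contraT => Hq.
have [Dc Hdc] := parent_spec Hc; have [Dq Hdq] := parent_spec Hq.
have Ec : parent (parent c) = c by apply: leaf_neighbour_unique Hl Dq _; rewrite D_sym.
by move: Hdq; rewrite Ec -Hdc; lia.
Qed.

Lemma distant_ancestor a x : ancestor a x -> a != x -> a != parent x ->
  depth a + 2 <= depth x /\ ~~ leaf a.
Proof.
move=> Hax Hne Hnp; have [w [Hw Ew Hwx]] := ancestor_child Hax Hne.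
have Hwx' : w != x by apply: contraNneq Hnp => Ewx; rewrite -Ewx Ew.
have [g [Hg Eg Hgx]] := ancestor_child Hwx Hwx'.
have [_ Hdw] := parent_spec Hw; have [_ Hdg] := parent_spec Hg.
have Hdx := ancestor_depth Hgx; rewrite Ew in Hdw; rewrite Eg in Hdg.
split; first lia.
apply/negP => La.
have Ea : a = rt by rewrite -Ew; apply: leaf_parent_root; rewrite ?Ew.
have Lw : leaf w by apply: leaf_root; rewrite -Ea.
by have := leaf_parent_root Hg; rewrite Eg => /(_ Lw) Ew0; rewrite Ew0 eqxx in Hw.
Qed.

Section TreeFrames.
Local Open Scope R_scope.

Definition max_depth : nat := \max_(y : T) depth y.
Definition pivot_line : R := INR max_depth + 2.

(* The span [depth x, frame_right x] of a non-leaf overlaps only the spans of its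
   parent and children; leaf frames reach across the pivot line, a leaf root less
   far than its unique child. *)
Definition frame_right (x : T) : R :=
  if leaf x then (if x == rt then pivot_line + 1 else pivot_line + 2)
  else INR (depth x) + 3/2.

Lemma frame_right_nonleaf x : ~~ leaf x -> frame_right x = INR (depth x) + 3/2.
Proof. by rewrite /frame_right => /negbTE ->. Qed.

Definition tree_frame (x : T) : frame :=
  Frame (INR (depth x)) (frame_right x) (band_lo x) (band_hi x).

Lemma depth_le_max x : INR (depth x) <= INR max_depth.
Proof. by apply/le_INR/leP/leq_bigmax. Qed.

Lemma tree_frame_ok x : frame_ok (tree_frame x).
Proof.
split; last exact: band_lo_lt_hi.
have := depth_le_max x; rewrite /tree_frame /frame_right /pivot_line /=.
by case: (leaf x); [case: (x == rt)|]; lra.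
Qed.

Lemma tree_frame_bounds x :
  0 <= fl (tree_frame x) /\ fr (tree_frame x) <= pivot_line + 2 /\
  0 <= fb (tree_frame x) /\ ft (tree_frame x) <= 1/2.
Proof.
have := depth_le_max x; have := pos_INR (depth x); have := band_range x.
rewrite /tree_frame /frame_right /pivot_line /=.
by case: (leaf x); [case: (x == rt)|]; lra.
Qed.

Lemma tree_frame_leaf x : leaf x ->
  fl (tree_frame x) < pivot_line /\ pivot_line + 1 <= fr (tree_frame x).
Proof.
move=> Lx; have := depth_le_max x; rewrite /tree_frame /frame_right /pivot_line /= Lx.
by case: (x == rt); lra.
Qed.

Lemma tree_frame_nonleaf x : ~~ leaf x -> fr (tree_frame x) < pivot_line.
Proof.
move=> Lx; have := depth_le_max x.
by rewrite /tree_frame /pivot_line /= (frame_right_nonleaf Lx); lra.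
Qed.

Lemma pivot_line_ge0 : 0 <= pivot_line.
Proof. by have := pos_INR max_depth; rewrite /pivot_line; lra. Qed.

Lemma frame_right_distant_ancestor a x : ancestor a x -> a != x -> a != parent x ->
  frame_right a < INR (depth x).
Proof.
move=> Hax Hne Hnp; have [/leP/le_INR Hd La] := distant_ancestor Hax Hne Hnp.
by rewrite (frame_right_nonleaf La); rewrite plus_INR /= in Hd; lra.
Qed.

Lemma parent_pokes_child c : c != rt -> pokes (tree_frame (parent c)) (tree_frame c).
Proof.
move=> Hc; have [_ Hd] := parent_spec Hc; have [Hlo Hhi] := child_band_sub Hc.
have Edc : INR (depth c) = INR (depth (parent c)) + 1 by rewrite -Hd S_INR.
have Mc := depth_le_max c; have Mq := depth_le_max (parent c).
rewrite /pokes /tree_frame /frame_right /pivot_line /=.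
case Lq: (leaf (parent c)).
- have Eq := leaf_parent_root Hc Lq.
  have Lc : leaf c by apply: leaf_root; rewrite -Eq.
  by rewrite Lc Eq eqxx (negbTE Hc); rewrite Eq in Hlo Hhi Edc Mq; lra.
- by case: (leaf c); rewrite ?(negbTE Hc); lra.
Qed.

Lemma pokes_parent a b : pokes (tree_frame a) (tree_frame b) -> b != rt /\ a = parent b.
Proof.
rewrite /pokes /tree_frame /= => -[[H1 H2] [H3 [H4 H5]]].
have Hab : a != b by apply/eqP => Eab; rewrite Eab in H1; lra.
have := band_lo_lt_hi a; have := band_lo_lt_hi b.
case: (bands_laminar a b) => [A|[A|[A|A]]] Hb Ha; try lra.
- case: (eqVneq a (parent b)) => [Ea|Hnp].
    by split=> //; exact: ancestor_proper_neq_root A Hab.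
  by have := frame_right_distant_ancestor A Hab Hnp; lra.
- by rewrite eq_sym in Hab; have [] := ancestor_band_strict A Hab; lra.
Qed.

Lemma tree_frame_edge x y : x != y -> D x y ->
  pokes (tree_frame x) (tree_frame y) \/ pokes (tree_frame y) (tree_frame x).
Proof.
by move=> _ /edge_parent[[Hx ->]|[Hy ->]]; [right | left]; apply: parent_pokes_child.
Qed.

Lemma tree_frame_nonedge x y : x != y -> ~~ D x y ->
  frames_apart (tree_frame x) (tree_frame y).
Proof.
move=> Hne nD; have Hne' : y != x by rewrite eq_sym.
rewrite /frames_apart /tree_frame /=.
case: (bands_laminar x y) => [A|[A|[A|A]]].
- by right; right; left.
- by right; right; right; left.
- by left; apply: frame_right_distant_ancestor A Hne (nonadjacent_not_parent A Hne nD).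
- rewrite D_sym in nD; right; left.
  exact: frame_right_distant_ancestor A Hne' (nonadjacent_not_parent A Hne' nD).
Qed.

Lemma tree_poke_empty a b z : pokes (tree_frame a) (tree_frame b) ->
  ~ subbox (tree_frame z) (poke_overlap (tree_frame a) (tree_frame b)).
Proof.
case/pokes_parent=> Hb ->; have := parent_pokes_child Hb; have := tree_frame_ok z.
rewrite /pokes /subbox /frame_ok /tree_frame /= => -[Hz Bz] Hp [H1 [H2 [H3 H4]]].
have Hzb : z != b by apply/eqP => Ez; rewrite Ez in H2; lra.
case: (bands_laminar z b) => [A|[A|[A|A]]]; try lra.
  by have [] := ancestor_band_strict A Hzb; lra.
rewrite eq_sym in Hzb; have [w [Hw Ew Hwz]] := ancestor_child A Hzb.
have Lb : ~~ leaf b.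
  by apply/negP => Lb; move: (leaf_parent_root Hw); rewrite Ew => /(_ Lb) E; rewrite E eqxx in Hb.
have Lq : ~~ leaf (parent b).
  apply/negP => Lq; move/negP: Lb; apply; apply: leaf_root.
  by rewrite -(leaf_parent_root Hb Lq).
have [_ Hdw] := parent_spec Hw; have [_ Hdb] := parent_spec Hb.
have /leP/le_INR Hdz := ancestor_depth Hwz; rewrite -Hdw Ew -Hdb !S_INR in Hdz.
by move: H2; rewrite (frame_right_nonleaf Lq); lra.
Qed.

Lemma tree_leaf_empty l z : leaf l -> ~ subbox (tree_frame z)
  (Frame (fl (tree_frame l)) pivot_line (fb (tree_frame l)) (ft (tree_frame l))).
Proof.
move=> Ll Hsub; have Lz : ~~ leaf z.
  by apply/negP => /tree_frame_leaf; move: Hsub; rewrite /subbox /=; lra.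
move: Hsub; have := band_lo_lt_hi z; rewrite /subbox /tree_frame /= => Hz [H1 [H2 [H3 H4]]].
have Hzl : z != l by apply: contraNneq Lz => ->.
case: (bands_laminar z l) => [A|[A|[A|A]]]; try lra.
  by have [] := ancestor_band_strict A Hzl; lra.
rewrite eq_sym in Hzl; have [w [Hw Ew _]] := ancestor_child A Hzl.
have Erl := leaf_parent_root Hw; rewrite Ew in Erl.
by move/negP: Lz; apply; apply: leaf_root; rewrite -(Erl Ll).
Qed.

Definition tree_layout : pivot_layout D leaf :=
  PivotLayout pivot_line_ge0 tree_frame_ok tree_frame_bounds tree_frame_leaf
    tree_frame_nonleaf tree_frame_edge tree_frame_nonedge tree_poke_empty tree_leaf_empty.

End TreeFrames.
End RootedTree.

Lemma del_rel_connect (V : finType) (e : rel V) (p : V) (a b : {x : V | x != p}) :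
  connect (del_rel e p) (val a) (val b) -> connect (relpre val e) a b.
Proof.
case/connectP=> s; elim: s a => [|x s IH] a /=; first by move=> _ /val_inj ->.
case/andP=> /and3P[Dax _ Hx] Hs Hl.
exact: connect_trans (connect1 (_ : relpre val e a (Sub x Hx))) (IH (Sub x Hx) Hs Hl).
Qed.

Lemma chandelier_layout (V : finType) (e : rel V) (p : V) : chandelier e p ->
  inhabited (pivot_layout (relpre (val : {x : V | x != p} -> V) e) (fun z => e p (val z))).
Proof.
move=> [e_irr [e_sym [[[x0 Hx0] [e_conn e_acyc]] e_pivot]]].
set D := relpre _ e; set leaf := fun z : {x : V | x != p} => e p (val z).
have del_val a b : del_rel e p (val a) (val b) = D a b.
  by rewrite /del_rel /D /= (valP a) (valP b) !andbT.
have D_sym : symmetric D by move=> a b; rewrite /D /= e_sym.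
have D_irr : irreflexive D by move=> a; rewrite /D /= e_irr.
have D_conn a b : connect D a b := del_rel_connect (e_conn _ _ (valP a) (valP b)).
have D_acyc s : uniq s -> 2 < size s -> ~~ cycle D s.
  move=> Hu Hs; have := e_acyc (map val s); rewrite map_inj_uniq ?size_map; last exact: val_inj.
  by rewrite cycle_map (eq_cycle del_val) => /(_ Hu Hs).
have leaf_unique z a b : leaf z -> D z a -> D z b -> a = b.
  rewrite /leaf e_pivot ?(valP z) // => /andP[_ /cards1P[y Hy]] Ha Hb; apply: val_inj.
  have : val a \in [set y | del_rel e p (val z) y] by rewrite inE del_val.
  have : val b \in [set y | del_rel e p (val z) y] by rewrite inE del_val.
  by rewrite Hy !inE => /eqP -> /eqP ->.
have [rt Hrt] : exists rt, leaf rt -> forall z, leaf z.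
  case: (pickP (fun z => ~~ leaf z)) => [r Hr|Hall]; first by exists r; rewrite (negbTE Hr).
  by exists (Sub x0 Hx0) => _ z; move/negbT: (Hall z); rewrite negbK.
exact: inhabits (tree_layout D_sym D_irr (D_conn rt) D_acyc leaf_unique Hrt).
Qed.

Section Gluing.
Local Open Scope R_scope.

Variables (V1 V2 : finType) (e1 : rel V1) (e2 : rel V2) (p : V2) (v : V1).
Local Notation S := {x : V2 | x != p}.
Local Notation W := (V1 + S)%type.
Local Notation glued := (glue p e1 e2 v).

Hypothesis e1_irr : irreflexive e1.
Hypothesis e2_irr : irreflexive e2.
Hypothesis e2_sym : symmetric e2.

Variable F1 : V1 -> frame.
Hypothesis F1_ok : forall u, frame_ok (F1 u).
Hypothesis F1_edge : forall u w, u != w -> (e1 u w <-> frames_meet (F1 u) (F1 w)).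
Hypothesis F1_corner : forall u w, u != w ->
  forall x y, corner (F1 u) x y -> ~ on_frame (F1 w) x y.
Hypothesis F1_left : forall u w, u != w ->
  forall x y, left_side (F1 u) x y -> ~ on_frame (F1 w) x y.
Hypothesis F1_right : forall u w, u != w ->
  (exists x y, right_side (F1 u) x y /\ on_frame (F1 w) x y) ->
  (exists x y, right_side (F1 u) x y /\ top_side (F1 w) x y) /\
  (exists x y, right_side (F1 u) x y /\ bottom_side (F1 w) x y).
Hypothesis F1_nested : forall u w, u != w -> frames_meet (F1 u) (F1 w) ->
  forall z, ~ (forall x y, on_frame (F1 z) x y -> in_region (F1 u) x y /\ in_region (F1 w) x y).

Variable L : pivot_layout (relpre (val : S -> V2) e2) (fun z => e2 p (val z)).

Local Notation xv := (fr (F1 v)).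
Local Notation yv := (ft (F1 v)).

Variable dl : R.
Hypothesis dl_gt0 : 0 < dl.
Hypothesis dl_clear : forall w, w != v -> square_clear (F1 w) xv yv dl.
Hypothesis dl_lt_width : dl < xv - fl (F1 v).
Hypothesis dl_lt_height : dl < yv - fb (F1 v).

Definition scale_x : R := dl / (lay_pivot L + 3).
Definition shift_x : R := xv - scale_x * lay_pivot L.
Definition scale_y : R := dl / 4.
Definition shift_y : R := yv - 3 * dl / 4.

(* The layout shrunk into the square of radius dl around (xv, yv), below yv, with
   the line x = lay_pivot sent to the right side x = xv of the frame of v. *)
Definition new_frame (z : S) : frame :=
  affine_frame scale_x shift_x scale_y shift_y (lay_frame L z).

Lemma scale_x_gt0 : 0 < scale_x.
Proof. by apply: Rdiv_lt_0_compat => //; have := lay_pivot_ge0 L; lra. Qed.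

Lemma scale_y_gt0 : 0 < scale_y.
Proof. by rewrite /scale_y; lra. Qed.

Lemma shift_x_pivot : scale_x * lay_pivot L + shift_x = xv.
Proof. by rewrite /shift_x; ring. Qed.

Lemma scale_x_range t : 0 <= t <= lay_pivot L + 2 ->
  xv - dl < scale_x * t + shift_x < xv + dl.
Proof.
move=> Ht; have Hs := scale_x_gt0; have H0 := lay_pivot_ge0 L.
have Hdl : scale_x * (lay_pivot L + 3) = dl by rewrite /scale_x; field; lra.
by rewrite /shift_x; split; nra.
Qed.

Lemma new_frame_ok z : frame_ok (new_frame z).
Proof. exact (affine_frame_ok shift_x shift_y scale_x_gt0 scale_y_gt0 (lay_frame_ok L z)). Qed.

Lemma new_frame_near z :
  xv - dl < fl (new_frame z) /\ fr (new_frame z) < xv + dl /\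
  yv - dl < fb (new_frame z) /\ ft (new_frame z) < yv.
Proof.
have [B1 [B2 [B3 B4]]] := lay_bounds L z; have := lay_frame_ok L z; move=> [O1 O2].
have [R1 _] := scale_x_range (conj B1 (Rlt_le _ _ (Rlt_le_trans _ _ _ O1 B2))).
have [_ R2] := scale_x_range (conj (Rlt_le _ _ (Rle_lt_trans _ _ _ B1 O1)) B2).
(* [/=] would also unfold [val] in the type of [L], so that [lra] no longer
   recognises the coordinates of [lay_frame L z] as the same atoms. *)
rewrite /new_frame /affine_frame /scale_y /shift_y; cbn [fl fr fb ft].
by split; [lra | split; [lra | split; nra]].
Qed.

Lemma new_frame_leaf z : e2 p (val z) -> fl (new_frame z) < xv < fr (new_frame z).
Proof.
move=> Lz; have [H1 H2] := lay_leaf L Lz.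
rewrite /new_frame /affine_frame; cbn [fl fr]; rewrite -shift_x_pivot.
by rewrite !(affine_lt _ _ _ scale_x_gt0); lra.
Qed.

Lemma new_frame_nonleaf z : ~~ e2 p (val z) -> fr (new_frame z) < xv.
Proof.
move=> Lz; have := lay_nonleaf L Lz.
rewrite /new_frame /affine_frame; cbn [fr].
by rewrite -shift_x_pivot affine_lt //; apply: scale_x_gt0.
Qed.

Lemma old_new_apart w z : w != v -> frames_apart (F1 w) (new_frame z).
Proof.
move=> Hw; have := dl_clear Hw; have := new_frame_near z.
have := new_frame_ok z; have := F1_ok w; frame_lra.
Qed.

Lemma pivot_pokes_leaf z : e2 p (val z) -> pokes (F1 v) (new_frame z).
Proof.
move=> /new_frame_leaf; have := new_frame_near z; have := new_frame_ok z; have := F1_ok v.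
frame_lra.
Qed.

Lemma pivot_apart_nonleaf z : ~~ e2 p (val z) -> frames_apart (F1 v) (new_frame z).
Proof.
move=> /new_frame_nonleaf; have := new_frame_near z; have := new_frame_ok z; have := F1_ok v.
by move=> *; right; right; right; right; right; frame_lra.
Qed.

Lemma no_old_frame_near_corner u B :
  xv - dl < fl B -> fr B < xv + dl -> yv - dl < fb B -> ft B < yv + dl -> ~ subbox (F1 u) B.
Proof.
case: (eqVneq u v) => [->|Hu]; first by frame_lra.
by have := dl_clear Hu; have := F1_ok u; frame_lra.
Qed.

Lemma pivot_frame_in_region u :
  u != v -> fl (F1 u) < xv < fr (F1 u) -> fb (F1 u) < yv < ft (F1 u) ->
  forall x y, on_frame (F1 v) x y -> in_region (F1 u) x y.
Proof.
move=> Hu [Hx1 Hx2] [Hy1 Hy2] x y Hxy.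
have [Ov1 Ov2] := F1_ok v; have [Ou1 Ou2] := F1_ok u.
have Hl : fl (F1 u) <= fl (F1 v).
  apply: Rnot_lt_le => Hlt; apply: (F1_left Hu (x := fl (F1 u)) (y := yv)).
    by split=> //; lra.
  by right; right; right; split=> //; lra.
have Hb : fb (F1 u) <= fb (F1 v).
  apply: Rnot_lt_le => Hlt; have Hvu : v != u by rewrite eq_sym.
  have Hmeet : exists x y, right_side (F1 v) x y /\ on_frame (F1 u) x y.
    by exists xv, (fb (F1 u)); split; [split=> //; lra | right; right; left; split=> //; lra].
  by have [[x' [y' [[_ Hr] [Ht _]]]] _] := F1_right Hvu Hmeet; lra.
by move: (on_frame_in_region (F1_ok v) Hxy); frame_lra.
Qed.

Lemma pivot_frame_in_cover u Z : frame_ok Z ->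
  xv - dl < fl Z -> fr Z < xv + dl -> yv - dl < fb Z -> ft Z < yv + dl -> subbox Z (F1 u) ->
  forall x y, on_frame (F1 v) x y -> in_region (F1 u) x y.
Proof.
move=> HZ H1 H2 H3 H4 Hsub.
case: (eqVneq u v) => [->|Hu]; first by move=> x y; apply: on_frame_in_region.
case: (dl_clear Hu) => [[A1 [A2 [A3 A4]]]|Hout]; first by apply: pivot_frame_in_region => //; lra.
by exfalso; move: Hout Hsub HZ; frame_lra.
Qed.

Lemma new_frame_pokes a b :
  pokes (new_frame a) (new_frame b) <-> pokes (lay_frame L a) (lay_frame L b).
Proof. exact (affine_pokes shift_x shift_y scale_x_gt0 scale_y_gt0 _ _). Qed.

Lemma new_frame_subbox Z B :
  subbox (affine_frame scale_x shift_x scale_y shift_y Z)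
         (affine_frame scale_x shift_x scale_y shift_y B) <-> subbox Z B.
Proof. exact (affine_subbox shift_x shift_y scale_x_gt0 scale_y_gt0 _ _). Qed.

Definition glue_frame (a : W) : frame :=
  match a with inl x => F1 x | inr z => new_frame z end.

Lemma glue_frame_ok a : frame_ok (glue_frame a).
Proof. by case: a => [x|z]; [exact: F1_ok | exact: new_frame_ok]. Qed.

Definition old_pair (a b : W) : bool :=
  match a, b with inl _, inl _ => true | _, _ => false end.

Lemma old_pairC a b : old_pair a b = old_pair b a.
Proof. by case: a b => [?|?] [?|?]. Qed.

Definition well_related (a b : W) : Prop :=
  (glued a b /\ (pokes (glue_frame a) (glue_frame b) \/ pokes (glue_frame b) (glue_frame a))) \/
  (~~ glued a b /\ frames_apart (glue_frame a) (glue_frame b)).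

Lemma old_new_well_related x z : well_related (inl x) (inr z).
Proof.
rewrite /well_related /=; case: (eqVneq x v) => [->|Hx] /=; last first.
  by right; split=> //; exact: old_new_apart.
case Lz: (e2 p (val z)); first by left; split=> //; left; exact: pivot_pokes_leaf.
by right; split=> //; apply: pivot_apart_nonleaf; rewrite Lz.
Qed.

Lemma new_old_well_related z x : well_related (inr z) (inl x).
Proof.
have := old_new_well_related x z; rewrite /well_related /= e2_sym.
by case=> [[G H]|[G H]]; [left; split; [|tauto] | right; split; [|exact: frames_apart_sym]].
Qed.

Lemma new_new_well_related z z' : z != z' -> well_related (inr z) (inr z').
Proof.
move=> Hz; rewrite /well_related /=; case E: (e2 (val z) (val z')).
  by left; split=> //; case: (lay_edge L Hz E) => H; [left | right]; apply/new_frame_pokes.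
right; split=> //; apply: (affine_frames_apart shift_x shift_y scale_x_gt0 scale_y_gt0).
by apply: lay_nonedge Hz _; rewrite /= E.
Qed.

Lemma glue_well_related a b : a != b -> ~~ old_pair a b -> well_related a b.
Proof.
case: a b => [x|z] [y|z'] //= Hab _; [exact: old_new_well_related | exact: new_old_well_related |].
by apply: new_new_well_related; apply: contraNneq Hab => ->.
Qed.

Lemma glue_pair_cases (P : W -> W -> Prop) :
  (forall x y, x != y -> P (inl x) (inl y)) ->
  (forall a b, a != b -> ~~ old_pair a b -> P a b) ->
  forall a b, a != b -> P a b.
Proof.
move=> Pold Pnew [x|z] [y|z'] Hab; try by apply: Pnew.
by apply: Pold; apply: contraNneq Hab => ->.
Qed.

Lemma well_related_placed a b : well_related a b -> well_placed (glue_frame a) (glue_frame b).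
Proof. by rewrite /well_placed; case=> [[_ [H|H]]|[_ H]]; tauto. Qed.

Lemma well_related_meet a b :
  well_related a b -> (glued a b <-> frames_meet (glue_frame a) (glue_frame b)).
Proof.
case=> [[G [H|H]]|[G H]]; split=> // Hm.
- exact: pokes_meet (glue_frame_ok b) H.
- by case: (pokes_meet (glue_frame_ok a) H) => x [y [H1 H2]]; exists x, y.
- by rewrite Hm in G.
- by case: (frames_apart_not_meet (glue_frame_ok a) (glue_frame_ok b) H Hm).
Qed.

Lemma pivot_leaf_box c :
  poke_overlap (F1 v) (new_frame c) = affine_frame scale_x shift_x scale_y shift_y
    (Frame (fl (lay_frame L c)) (lay_pivot L) (fb (lay_frame L c)) (ft (lay_frame L c))).
Proof. by rewrite /poke_overlap /affine_frame /= shift_x_pivot. Qed.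

Lemma glue_poke_empty a b z : ~~ old_pair a b -> pokes (glue_frame a) (glue_frame b) ->
  ~ subbox (glue_frame z) (poke_overlap (glue_frame a) (glue_frame b)).
Proof.
case: a b => [x|q] [y|c] //= _ Hp.
- have Hx : x = v.
    case: (eqVneq x v) => // Hx.
    by case: (pokes_not_apart (F1_ok x) (new_frame_ok c) Hp (old_new_apart c Hx)).
  subst x; have Lc : e2 p (val c).
    case: (boolP (e2 p (val c))) => // Lc.
    by case: (pokes_not_apart (F1_ok v) (new_frame_ok c) Hp (pivot_apart_nonleaf Lc)).
  have [N1 [N2 [N3 N4]]] := new_frame_near c.
  case: z => [u|z] /=.
    by apply: no_old_frame_near_corner; cbn [fl fr fb ft poke_overlap]; lra.
  by rewrite pivot_leaf_box new_frame_subbox; apply: lay_leaf_empty.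
- case: (eqVneq y v) => [Eyv|Hy]; last first.
    have Hap := frames_apart_sym (old_new_apart q Hy).
    by case: (pokes_not_apart (new_frame_ok q) (F1_ok y) Hp Hap).
  subst y; case: (boolP (e2 p (val q))) => Lq; first by case: (pokes_asym Hp (pivot_pokes_leaf Lq)).
  have Hap := frames_apart_sym (pivot_apart_nonleaf Lq).
  by case: (pokes_not_apart (new_frame_ok q) (F1_ok v) Hp Hap).
- have [N1 [N2 [N3 N4]]] := new_frame_near c; have [Q1 [Q2 [Q3 Q4]]] := new_frame_near q.
  case: z => [u|z] /=.
    by apply: no_old_frame_near_corner; cbn [fl fr fb ft poke_overlap]; lra.
  move=> Hsub; apply: (lay_poke_empty (proj1 (new_frame_pokes q c) Hp)).
  exact: (proj1 (new_frame_subbox _ (poke_overlap (lay_frame L q) (lay_frame L c))) Hsub).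
Qed.

Lemma glue_nested : forall a b, a != b -> frames_meet (glue_frame a) (glue_frame b) ->
  forall z, ~ (forall x y, on_frame (glue_frame z) x y ->
                in_region (glue_frame a) x y /\ in_region (glue_frame b) x y).
Proof.
apply: glue_pair_cases => [x y Hxy | a b Hab Hold] Hm z Hz.
  case: z Hz => [u|z] /= Hz; first exact: (F1_nested Hxy Hm Hz).
  have Sx : subbox (new_frame z) (F1 x) by apply: on_frame_subbox (new_frame_ok z) _ => ? ? /Hz[].
  have Sy : subbox (new_frame z) (F1 y) by apply: on_frame_subbox (new_frame_ok z) _ => ? ? /Hz[].
  have [N1 [N2 [N3 N4]]] := new_frame_near z.
  apply: (F1_nested Hxy Hm (z := v)) => x' y' H.
  by split; apply: pivot_frame_in_cover (new_frame_ok z) N1 N2 N3 _ _ x' y' H => //; lra.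
have Sa : subbox (glue_frame z) (glue_frame a).
  by apply: on_frame_subbox (glue_frame_ok z) _ => ? ? /Hz[].
have Sb : subbox (glue_frame z) (glue_frame b).
  by apply: on_frame_subbox (glue_frame_ok z) _ => ? ? /Hz[].
case: (glue_well_related Hab Hold) => [[_ [H|H]]|[_ H]].
- exact: glue_poke_empty Hold H (subbox_poke_overlap Sa Sb).
- by rewrite old_pairC in Hold; exact: glue_poke_empty Hold H (subbox_poke_overlap Sb Sa).
- exact: frames_apart_not_meet (glue_frame_ok a) (glue_frame_ok b) H Hm.
Qed.

Lemma glue_restricted_frame_graph : restricted_frame_graph glued.
Proof.
split; first by case=> [x|z] /=; [exact: e1_irr | exact: e2_irr].
have placed a b : a != b -> ~~ old_pair a b -> well_placed (glue_frame a) (glue_frame b).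
  by move=> Hab Hold; exact/well_related_placed/glue_well_related.
exists glue_frame; split; first exact: glue_frame_ok.
split.
  apply: glue_pair_cases => [x y|a b Hab Hold]; first exact: F1_edge.
  exact/well_related_meet/glue_well_related.
split.
  apply: glue_pair_cases => [x y|a b Hab Hold]; first exact: F1_corner.
  move=> x y.
  exact: well_placed_corner (glue_frame_ok a) (glue_frame_ok b) (placed a b Hab Hold).
split.
  apply: glue_pair_cases => [x y|a b Hab Hold]; first exact: F1_left.
  move=> x y.
  exact: well_placed_left_side (glue_frame_ok a) (glue_frame_ok b) (placed a b Hab Hold).
split; last exact: glue_nested.
apply: glue_pair_cases => [x y|a b Hab Hold]; first exact: F1_right.
exact: well_placed_right_side (glue_frame_ok a) (glue_frame_ok b) (placed a b Hab Hold).
Qed.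

End Gluing.

Theorem lemma4p3 (V1 V2 : finType) (e1 : rel V1) (e2 : rel V2) (p : V2) (v : V1) :
  restricted_frame_graph e1 -> chandelier e2 p ->
  restricted_frame_graph (glue p e1 e2 v).
Proof.
move=> [e1_irr [F1 [F1_ok [F1_edge [F1_corner [F1_left [F1_right F1_nested]]]]]]] Hch.
have [e2_irr [e2_sym _]] := Hch.
have [L] := chandelier_layout Hch.
have corner_off w : w != v -> ~ on_frame (F1 w) (fr (F1 v)) (ft (F1 v)).
  by move=> Hw; apply: (F1_corner v w); [rewrite eq_sym | split; right].
have [dl dl_gt0 [dl_clear dl_w dl_h]] := corner_radius corner_off (F1_ok v).
exact (glue_restricted_frame_graph e1_irr e2_irr e2_sym F1_ok F1_edge F1_corner F1_left
  F1_right F1_nested L dl_gt0 dl_clear dl_w dl_h).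
Qed.
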